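(* Let $k \geq \ell \ge 1$, $n \geq k+\ell$, and let $\mathcal F \subset \binom{[n]}{k}$, $\mathcal G \subset \binom{[n]}{\ell}$ be initial, cross-intersecting families. For $G \in \mathcal G$ let $p(G)$ be the largest integer $p \in \{0,1,\dots,\ell\}$ such that $|G \cap [2p+k-\ell]| \geq p$. Assume that if $k=\ell$ then $p(G) \geq 1$ for all $G \in \mathcal G$. Define $\varphi(G) = G \,\Delta\, [2p(G)+k-\ell]$ (symmetric difference). Then: (i) $|\varphi(G)| = k$ for all $G \in \mathcal G$; (ii) $\varphi$ is injective on $\mathcal G$ and $\varphi(G) \notin \mathcal F$ for all $G \in \mathcal G$; (iii) $\varphi(G) \cap [\ell] \neq \emptyset$ for every $G \in \mathcal G$ with $G \neq [\ell]$.
   Context: $[m]=\{1,\dots,m\}$ ($[0]=\emptyset$). For $r$-sets $A=\{x_1<\dots<x_r\}$, $B=\{y_1<\dots<y_r\}$, $A\prec B$ means $x_i\le y_i$ for all $i$; a family of $r$-sets is initial if $A\prec B\in\mathcal F$ implies $A\in\mathcal F$. Families are cross-intersecting if every member of one meets every member of the other. *)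

(* Ground set [n] = {1,...,n} is encoded as 'I_n, the
   element i : 'I_n standing for i+1.  Hence [m] = {1..m} is encoded as
   iseg m = [set i : 'I_n | i < m]. *)
From mathcomp Require Import all_boot.
Set Implicit Arguments. Unset Strict Implicit. Unset Printing Implicit Defensive.

Section Defs.
Variable n : nat.

Definition iseg (m : nat) : {set 'I_n} := [set i : 'I_n | i < m].

Definition sorted_elems (A : {set 'I_n}) : seq nat :=
  sort leq [seq val x | x <- enum A].

Definition shift_le (A B : {set 'I_n}) : bool :=
  (#|A| == #|B|) &&
  all (fun i => nth 0 (sorted_elems A) i <= nth 0 (sorted_elems B) i)
      (iota 0 #|A|).

Definition initial (F : {set {set 'I_n}}) : Prop :=
  forall A B : {set 'I_n}, shift_le A B -> B \in F -> A \in F.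

Definition cross_intersecting (F G : {set {set 'I_n}}) : Prop :=
  forall A B, A \in F -> B \in G -> A :&: B != set0.

Definition symdiff (A B : {set 'I_n}) : {set 'I_n} := (A :\: B) :|: (B :\: A).

Definition pG (k l : nat) (G : {set 'I_n}) : nat :=
  \max_(p < l.+1 | p <= #|G :&: iseg (2 * p + k - l)|) (p : nat).

Definition phi (k l : nat) (G : {set 'I_n}) : {set 'I_n} :=
  symdiff G (iseg (2 * pG k l G + k - l)).
End Defs.

From Pilot Require Import Defs.
From mathcomp Require Import all_boot zify.
Set Implicit Arguments. Unset Strict Implicit. Unset Printing Implicit Defensive.

(* Shift order is tested through prefix counts: A ≺ B iff |A| = |B| and
   |B ∩ [x]| <= |A ∩ [x]| for all x.  Put m = 2p(G) + k - l.  Maximality of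
   p(G) gives |G ∩ [m]| = p(G) and |G ∩ [m + 2t]| < p(G) + t for t >= 1: the
   elements of G beyond m are dominated by m+1, m+3, m+5, ....  Hence
   |φ(G)| = |G| + m - 2p(G) = k, and |φ(G) ∩ [m]| = m - p(G) pins down p(G),
   which gives injectivity.  If φ(G) were in F, replacing the tail of G beyond
   m by m+1, m+3, ... and the tail of φ(G) by m+2, m+4, ... would produce, by
   initiality, disjoint members of G and F. *)

Lemma sorted_nth_ltn_count (s : seq nat) i x : sorted leq s -> i < size s ->
  (nth 0 s i < x) = (i < count (fun y => y < x) s).
Proof.
move=> s_sorted i_lt.
have nth_mono j1 j2 : j1 <= j2 -> j2 < size s -> nth 0 s j1 <= nth 0 s j2.
  by move=> j12 j2s; apply: (sorted_leq_nth leq_trans leqnn 0 s_sorted); rewrite ?inE //; lia.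
case: (ltnP (nth 0 s i) x) => [si_lt | si_ge]; apply/esym.
- rewrite -(cat_take_drop i.+1 s) count_cat; apply: leq_trans (leq_addr _ _).
  have: all (fun y => y < x) (take i.+1 s).
    apply/(all_nthP 0) => j; rewrite size_takel // => j_lt.
    by rewrite nth_take //; apply: leq_ltn_trans si_lt; apply: nth_mono.
  by rewrite all_count size_takel // => /eqP ->.
- apply/negbTE; rewrite -leqNgt -(cat_take_drop i s) count_cat.
  have -> : count (fun y => y < x) (drop i s) = 0.
    apply/eqP; rewrite -leqn0 leqNgt -has_count; apply/(has_nthP 0) => -[j].
    rewrite size_drop nth_drop => j_lt; apply/negP; rewrite -leqNgt.
    by apply: leq_trans si_ge _; apply: nth_mono; lia.
  by rewrite addn0; apply: leq_trans (count_size _ _) _; rewrite size_take_min geq_minl.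
Qed.

Section PrefixCounts.
Variable n : nat.
Implicit Types (A B C : {set 'I_n}) (P : pred nat).

Lemma count_lt_sorted_elems A x :
  count (fun y => y < x) (sorted_elems A) = #|A :&: iseg n x|.
Proof.
rewrite /sorted_elems count_sort count_map cardE /enum_mem size_filter count_filter.
by apply: eq_count => y; rewrite !inE andbC.
Qed.

Lemma size_sorted_elems A : size (sorted_elems A) = #|A|.
Proof. by rewrite /sorted_elems size_sort size_map cardE. Qed.

Lemma sorted_elems_sorted A : sorted leq (sorted_elems A).
Proof. exact: (sort_sorted leq_total). Qed.

Lemma mem_sorted_elems A y : y \in sorted_elems A -> y < n.
Proof. by rewrite /sorted_elems mem_sort => /mapP[a _ ->]; exact: ltn_ord. Qed.

Lemma shift_le_prefix A B : #|A| = #|B| ->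
  (forall x, x <= n -> #|B :&: iseg n x| <= #|A :&: iseg n x|) -> shift_le A B.
Proof.
move=> AB prefix; rewrite /shift_le AB eqxx /=; apply/allP => i.
rewrite mem_iota add0n => /andP[_ i_lt].
have iA : i < size (sorted_elems A) by rewrite size_sorted_elems AB.
have iB : i < size (sorted_elems B) by rewrite size_sorted_elems.
set b := nth 0 (sorted_elems B) i.
have b_lt : b < n by apply/mem_sorted_elems/mem_nth.
rewrite -ltnS (sorted_nth_ltn_count _ (sorted_elems_sorted A) iA) count_lt_sorted_elems.
apply: leq_trans (prefix _ b_lt); rewrite -count_lt_sorted_elems.
by rewrite -sorted_nth_ltn_count ?sorted_elems_sorted.
Qed.

Lemma card_set_nat P : #|[set y : 'I_n | P y]| = count P (iota 0 n).
Proof.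
rewrite -val_enum_ord count_map cardsE cardE /enum_mem size_filter.
by rewrite (@eq_filter _ _ predT) ?filter_predT.
Qed.

Lemma card_setI_iseg_nat P x : x <= n ->
  #|[set y : 'I_n | P y] :&: iseg n x| = count P (iota 0 x).
Proof.
move=> xn; have -> : [set y : 'I_n | P y] :&: iseg n x = [set y : 'I_n | P y && (y < x)].
  by apply/setP => y; rewrite !inE.
rewrite (card_set_nat (fun y => P y && (y < x))) -(subnKC xn) iotaD count_cat add0n.
rewrite (@eq_in_count _ _ pred0 (iota x _)) ?count_pred0 ?addn0; last first.
  by move=> y; rewrite mem_iota => /andP[xy _] /=; rewrite ltnNge xy andbF.
by apply: eq_in_count => y; rewrite mem_iota => /andP[_ y_lt] /=; rewrite y_lt andbT.
Qed.

Lemma card_iseg x : x <= n -> #|iseg n x| = x.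
Proof.
move=> xn; rewrite -[RHS](size_iota 0) -count_predT -card_setI_iseg_nat //.
by apply: eq_card => y; rewrite !inE.
Qed.

Lemma iseg_setI a b : iseg n a :&: iseg n b = iseg n (minn a b).
Proof. by apply/setP => y; rewrite !inE leq_min. Qed.

Lemma card_setI_iseg_mono A x y : x <= y -> #|A :&: iseg n x| <= #|A :&: iseg n y|.
Proof.
move=> xy; apply/subset_leq_card/setIS/subsetP => z; rewrite !inE => zx.
exact: leq_trans zx xy.
Qed.

Lemma card_setI_iseg_lt A x : x <= n -> #|A| = x -> A != iseg n x ->
  #|A :&: iseg n x| < x.
Proof.
move=> xn Ax A_neq; rewrite ltn_neqAle -[X in _ <= X]Ax subset_leq_card ?subsetIl // andbT.
apply: contraNneq A_neq => Ax_card.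
have /eqP/setIidPl A_sub : A :&: iseg n x == A by rewrite eqEcard subsetIl Ax_card Ax /=.
by rewrite eqEcard A_sub card_iseg // Ax /=.
Qed.

Lemma card_symdiff A B : #|symdiff A B| + 2 * #|A :&: B| = #|A| + #|B|.
Proof.
have -> : symdiff A B = (A :|: B) :\: (A :&: B).
  by apply/setP => y; rewrite !inE; case: (y \in A); case: (y \in B).
rewrite cardsD (setIidPr (subset_trans (subsetIl A B) (subsetUl A B))).
have := cardsUI A B; have := subset_leq_card (subset_trans (subsetIl A B) (subsetUl A B)).
lia.
Qed.

Lemma symdiff_setIr A B C : symdiff A B :&: C = symdiff (A :&: C) (B :&: C).
Proof.
by apply/setP => y; rewrite !inE; case: (y \in A); case: (y \in B); case: (y \in C).
Qed.

Lemma symdiffK A B : symdiff (symdiff A B) B = A.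
Proof. by apply/setP => y; rewrite !inE; case: (y \in A); case: (y \in B). Qed.

End PrefixCounts.

(* With the shift of indices of Defs, [alternate m r false] is the paper's
   {m+1, m+3, ..., m+2r-1} and [alternate m r true] is {m+2, m+4, ..., m+2r}. *)
Definition in_alternate (m r : nat) (b : bool) : pred nat :=
  fun y => (m <= y < m + 2 * r) && (odd (y - m) == b).

Lemma in_alternate_addr m r b j : in_alternate m r b (m + j) = (j < 2 * r) && (odd j == b).
Proof. by rewrite /in_alternate leq_addr ltn_add2l addKn. Qed.

Lemma count_alternate_iota m r b q :
  count (in_alternate m r b) (iota 0 (m + 2 * q)) = minn r q.
Proof.
elim: q => [|q IHq].
  rewrite muln0 addn0 (@eq_in_count _ _ pred0) ?count_pred0 ?minn0 // => y.
  by rewrite mem_iota /in_alternate => /andP[_ y_lt] /=; rewrite leqNgt y_lt.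
have -> : m + 2 * q.+1 = m + 2 * q + 2 by lia.
rewrite iotaD count_cat IHq add0n /= -addnS !in_alternate_addr.
rewrite /= mul2n odd_double.
have -> : (q.*2 < 2 * r) = (q < r) by apply/idP/idP; lia.
have -> : (q.*2.+1 < 2 * r) = (q < r) by apply/idP/idP; lia.
by clear IHq; case: b; case: (ltnP q r) => q_r /=; lia.
Qed.

Section Alternate.
Variable n : nat.
Implicit Types (S : {set 'I_n}) (m r x : nat) (b : bool).

Definition alternate m r b : {set 'I_n} := [set y : 'I_n | in_alternate m r b y].

Lemma alternate_setI_iseg m r b : alternate m r b :&: iseg n m = set0.
Proof.
by apply/setP => y; rewrite !inE /in_alternate; case: (ltnP y m); rewrite ?andbF.
Qed.

Lemma card_alternate m r b : m + 2 * r <= n -> #|alternate m r b| = r.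
Proof.
move=> mrn; rewrite -[r in RHS]minnn -(count_alternate_iota m r b).
rewrite -(@card_setI_iseg_nat n) //; apply: eq_card => y.
by rewrite !inE /in_alternate; case: (ltnP y (m + 2 * r)); rewrite ?andbT ?andbF.
Qed.

Lemma card_alternate_prefix m r b x : x <= n ->
  minn r ((x - m) %/ 2) <= #|alternate m r b :&: iseg n x|.
Proof.
move=> xn; case: (ltnP x m) => [x_lt | m_le].
  by rewrite (eqP (_ : x - m == 0)) ?div0n ?minn0 //; lia.
rewrite card_setI_iseg_nat // -(count_alternate_iota m r b).
set q := (x - m) %/ 2; have mq : m + 2 * q <= x by have := leq_divM (x - m) 2; lia.
by rewrite -(subnKC mq) (iotaD 0 (m + 2 * q)) count_cat leq_addr.
Qed.

Lemma shift_le_truncate S m r b : m + 2 * r <= n ->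
  #|S| = #|S :&: iseg n m| + r ->
  (forall x, m <= x <= n -> #|S :&: iseg n x| <= #|S :&: iseg n m| + minn r ((x - m) %/ 2)) ->
  shift_le ((S :&: iseg n m) :|: alternate m r b) S.
Proof.
move=> mrn cardS growth.
have disj x : (S :&: iseg n m :&: iseg n x) :&: (alternate m r b :&: iseg n x) = set0.
  apply/setP => y; have /setP/(_ y) := alternate_setI_iseg m r b.
  by rewrite !inE; case: (y < m); rewrite ?andbF ?andbT // => ->; rewrite andbF.
have prefix x : #|((S :&: iseg n m) :|: alternate m r b) :&: iseg n x|
    = #|S :&: iseg n (minn m x)| + #|alternate m r b :&: iseg n x|.
  by rewrite setIUl cardsU disj cards0 subn0 -setIA iseg_setI.
apply: shift_le_prefix.
  rewrite cardsU card_alternate // cardS.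
  by rewrite -setIA (setIC (iseg n m)) alternate_setI_iseg setI0 cards0 subn0.
move=> x xn; rewrite prefix; case: (leqP x m) => [_ | m_lt]; first exact: leq_addr.
apply: leq_trans (growth x _) _; first lia.
by rewrite leq_add2l card_alternate_prefix.
Qed.

End Alternate.

Section Phi.
Variables n k l : nat.
Hypotheses (l_le_k : l <= k) (kl_le_n : k + l <= n).
Implicit Types B : {set 'I_n}.
Local Notation cut B := (2 * pG k l B + k - l).

Lemma pG_leq B : pG k l B <= l.
Proof. by apply/bigmax_leqP => p _; rewrite -ltnS. Qed.

Lemma pG_max B q : q <= l -> q <= #|B :&: iseg n (2 * q + k - l)| -> q <= pG k l B.
Proof.
rewrite -ltnS => q_lt q_le.
exact: (@leq_bigmax_cond _ _ (fun p : 'I_l.+1 => p : nat) (Ordinal q_lt) q_le).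
Qed.

Lemma pG_attained B : pG k l B <= #|B :&: iseg n (cut B)|.
Proof.
by apply: (big_ind (fun v => v <= #|B :&: iseg n (2 * v + k - l)|)) => // x y; case: (leqP x y).
Qed.

Lemma card_prefix_above_pG B q : pG k l B < q -> q <= l ->
  #|B :&: iseg n (2 * q + k - l)| < q.
Proof.
move=> p_lt q_le; rewrite ltnNge; apply/negP => /(pG_max q_le).
by rewrite leqNgt p_lt.
Qed.

Lemma cut_leq B : cut B <= n.
Proof. by have := pG_leq B; lia. Qed.

Lemma card_cut B : #|B| = l -> #|B :&: iseg n (cut B)| = pG k l B.
Proof.
move=> Bl; apply/eqP; rewrite eqn_leq pG_attained andbT.
case: (ltnP (pG k l B) l) => [p_lt | l_le].
  apply: leq_trans (card_setI_iseg_mono B (_ : _ <= 2 * (pG k l B).+1 + k - l)) _; first lia.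
  by rewrite -ltnS card_prefix_above_pG.
by apply: leq_trans (subset_leq_card (subsetIl _ _)) _; rewrite Bl.
Qed.

Lemma card_prefix_growth B x : #|B| = l -> cut B <= x ->
  #|B :&: iseg n x| <= pG k l B + minn (l - pG k l B) ((x - cut B) %/ 2).
Proof.
move=> Bl m_le; have p_le := pG_leq B.
have B_le : #|B :&: iseg n x| <= l by rewrite -Bl subset_leq_card ?subsetIl.
set t := (x - cut B) %/ 2.
case: (leqP l (pG k l B + t)) => [l_le | lt_l]; first lia.
have := card_prefix_above_pG (_ : pG k l B < (pG k l B + t).+1) lt_l.
have := card_setI_iseg_mono B (_ : x <= 2 * (pG k l B + t).+1 + k - l).
rewrite /t; lia.
Qed.

Lemma card_phi_prefix B x : x <= n ->
  #|phi k l B :&: iseg n x| + 2 * #|B :&: iseg n (minn (cut B) x)|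
  = #|B :&: iseg n x| + minn (cut B) x.
Proof.
move=> xn; have min_x : minn x (minn (cut B) x) = minn (cut B) x by lia.
have := card_symdiff (B :&: iseg n x) (iseg n (cut B) :&: iseg n x).
by rewrite -symdiff_setIr -setIA !iseg_setI min_x card_iseg //; lia.
Qed.

Lemma card_phi B : #|B| = l -> #|phi k l B| = k.
Proof.
move=> Bl; have := card_symdiff B (iseg n (cut B)).
by rewrite /phi card_cut // card_iseg ?cut_leq // Bl; have := pG_leq B; lia.
Qed.

Lemma card_phi_cut B : #|B| = l -> #|phi k l B :&: iseg n (cut B)| = cut B - pG k l B.
Proof. by move=> Bl; have := card_phi_prefix B (cut_leq B); rewrite minnn card_cut //; lia. Qed.

Lemma card_phi_prefix_lt B q : #|B| = l -> pG k l B < q -> q <= l ->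
  #|phi k l B :&: iseg n (2 * q + k - l)| < 2 * q + k - l - q.
Proof.
move=> Bl p_lt q_le; have := card_phi_prefix B (_ : 2 * q + k - l <= n).
rewrite (minn_idPl (_ : cut B <= 2 * q + k - l)) ?card_cut //; try lia.
by have := card_prefix_above_pG p_lt q_le; lia.
Qed.

Lemma phi_inj B1 B2 : #|B1| = l -> #|B2| = l -> phi k l B1 = phi k l B2 -> B1 = B2.
Proof.
wlog p12 : B1 B2 / pG k l B1 <= pG k l B2.
  move=> wlog_p B1l B2l e; case: (leqP (pG k l B1) (pG k l B2)) => [|/ltnW] p.
  - exact: wlog_p.
  - exact/esym/wlog_p.
move=> B1l B2l e; case: (ltngtP (pG k l B1) (pG k l B2)) p12 => // [p_lt | p_eq] _.
  by have := card_phi_prefix_lt B1l p_lt (pG_leq B2); rewrite e card_phi_cut //; lia.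
move: e; rewrite /phi p_eq => e.
by rewrite -(symdiffK B1 (iseg n (cut B2))) e symdiffK.
Qed.

Lemma phi_notin (F G : {set {set 'I_n}}) B :
  initial F -> initial G -> cross_intersecting F G -> B \in G -> #|B| = l ->
  phi k l B \notin F.
Proof.
move=> iF iG FG BG Bl; apply/negP => phiF.
have p_le := pG_leq B.
have mrn : cut B + 2 * (l - pG k l B) <= n by lia.
pose low := B :&: iseg n (cut B) :|: alternate n (cut B) (l - pG k l B) false.
pose high := phi k l B :&: iseg n (cut B) :|: alternate n (cut B) (l - pG k l B) true.
have lowG : low \in G.
  apply: iG BG; apply: shift_le_truncate => //; rewrite card_cut //; first lia.
  by move=> x /andP[m_le _]; exact: card_prefix_growth.
have highF : high \in F.
  apply: iF phiF; apply: shift_le_truncate => //; rewrite card_phi_cut //.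
    by rewrite card_phi //; lia.
  move=> x /andP[m_le xn]; have := card_phi_prefix B xn.
  by rewrite (minn_idPl m_le) card_cut //; have := card_prefix_growth Bl m_le; lia.
have := FG _ _ highF lowG; apply/negP; rewrite negbK; apply/eqP/setP => y.
rewrite /phi /symdiff !inE /in_alternate.
by case: (y \in B); case: (ltnP y (cut B)); case: (odd _); rewrite ?andbF ?andbT.
Qed.

Lemma phi_meet_iseg B : #|B| = l -> B != iseg n l -> (k = l -> 0 < pG k l B) ->
  phi k l B :&: iseg n l != set0.
Proof.
move=> Bl B_neq p_pos; rewrite -card_gt0.
have ln : l <= n by lia.
have := card_phi_prefix B ln; case: (leqP (cut B) l) => [m_le | l_lt].
  have := card_setI_iseg_mono B m_le; rewrite card_cut //.
  by case: (eqVneq k l) => [/p_pos | ]; lia.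
by have := card_setI_iseg_lt ln Bl B_neq; lia.
Qed.

End Phi.

Theorem lemma5p1 (n k l : nat) (F G : {set {set 'I_n}}) :
  1 <= l -> l <= k -> k + l <= n ->
  (forall A, A \in F -> #|A| = k) ->
  (forall B, B \in G -> #|B| = l) ->
  initial F -> initial G -> cross_intersecting F G ->
  (k = l -> forall B, B \in G -> 1 <= pG k l B) ->
  (forall B, B \in G -> #|phi k l B| = k) /\
  ({in G &, injective (phi k l)} /\ (forall B, B \in G -> phi k l B \notin F)) /\
  (forall B, B \in G -> B != @iseg n l -> phi k l B :&: @iseg n l != set0).
Proof.
move=> _ lk kln _ cardG iF iG FG pG_pos.
split; [|split; [split|]].
- by move=> B /cardG; exact: card_phi.
- by move=> B1 B2 /cardG B1l /cardG B2l; exact: phi_inj.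
- by move=> B BG; exact: phi_notin iF iG FG BG (cardG B BG).
- move=> B BG B_neq; apply: (phi_meet_iseg lk kln (cardG B BG) B_neq) => kl.
  exact: pG_pos.
Qed.
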